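(* Let $(M,d)$ be a compact metric space, $\varphi:M\to M$ continuous, $\mathcal G=\{G_n\}\in\mathcal A(M)$, and $\mathbb P\in\mathcal P(M)$ with $\mathrm{supp}(\mathbb P)=M$. Assume that for every $\epsilon>0$ there are $K_n(\epsilon)\ge1$ with $\lim_{\epsilon\downarrow0}\limsup_nn^{-1}\log K_n(\epsilon)=0$ such that for every $n\ge1$ the inequalities $$K_n(\epsilon)^{-1}e^{G_n(x)-n\mathfrak p_\varphi(\mathcal G)}\le\mathbb P(B_n(x,\epsilon))\le K_n(\epsilon)e^{G_n(x)-n\mathfrak p_\varphi(\mathcal G)}$$ hold for $\mathbb P$-almost every $x\in M$. Then $\mathbb P$ is a weak Gibbs measure for $\mathcal G$.
   Context: $C(M),B(M)$: continuous/bounded Borel real functions, sup norm; $S_nG=\sum_{k<n}G\circ\varphi^k$; $B_n(x,\epsilon)=\{y:d(\varphi^ky,\varphi^kx)<\epsilon,0\le k<n\}$. $\mathcal A(M)$: $\{G_n\}\subset B(M)$ with some $\{G^{(k)}\}\subset C(M)$ satisfying $\lim_k\limsup_nn^{-1}\|G_n-S_nG^{(k)}\|_\infty=0$. Pressure $\mathfrak p_\varphi(\mathcal G)=\lim_{\epsilon\downarrow0}\limsup_nn^{-1}\log\inf\{\sum_{x\in E}e^{G_n(x)}:E\text{ finite},\bigcup_{x\in E}B_n(x,\epsilon)=M\}$. Weak Gibbs measure for $\mathcal G$: $\mathbb P\in\mathcal P(M)$ such that for every $n\ge1$, $\epsilon>0$ there is $K_n(\epsilon)\ge1$ with the two-sided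 bound above holding for every $x\in M$, and $\lim_{\epsilon\downarrow0}\limsup_nn^{-1}\log K_n(\epsilon)=0$. *)

From HB Require Import structures.
From mathcomp Require Import all_boot all_order all_algebra.
From mathcomp Require Import all_classical all_reals all_analysis.
Set Implicit Arguments. Unset Strict Implicit. Unset Printing Implicit Defensive.
Import Order.TTheory GRing.Theory Num.Theory.
Import numFieldNormedType.Exports.
Local Open Scope classical_set_scope.
Local Open Scope ring_scope.

(** Metric spaces with a distinguished point (needed by the library's
    generated-sigma-algebra construction; harmless since a probability
    measure forces M to be nonempty). *)
#[short(type="pointedMetricType")]
HB.structure Definition PointedMetric (K : numDomainType) :=
  { M of Pointed M & Metric K M }.

Notation BorelType M := (g_sigma_algebraType (@open M)).

Section Defs.
Context {R : realType} {M : pointedMetricType R}.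

Definition bowen_ball (phi : M -> M) (n : nat) (x : M) (eps : R) : set M :=
  [set y | forall k : nat, (k < n)%N -> mdist (iter k phi y) (iter k phi x) < eps].

Definition birkhoff (phi : M -> M) (n : nat) (G : M -> R) : M -> R :=
  fun x => \sum_(k < n) G (iter k phi x).

Definition supnorm (f : M -> R) : R := sup (range (fun x => `|f x|)).

Definition bounded_borel (f : M -> R) : Prop :=
  measurable_fun setT (f : BorelType M -> R) /\ exists c : R, forall x, `|f x| <= c.

Definition asymp_additive (phi : M -> M) (G : nat -> M -> R) : Prop :=
  (forall n, bounded_borel (G n)) /\
  exists Gk : nat -> M -> R, (forall k, continuous (Gk k)) /\
    (fun k => limn_esup (fun n =>
        (n%:R^-1 * supnorm (fun x => G n x - birkhoff phi n (Gk k) x))%:E))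
      @ \oo --> 0%E.

Definition cover_sums (phi : M -> M) (G : nat -> M -> R) (n : nat) (eps : R) : set R :=
  [set s | exists E : seq M, uniq E /\
      (forall y : M, exists2 x, x \in E & bowen_ball phi n x eps y) /\
      s = \sum_(x <- E) expR (G n x)].

Definition pressure (phi : M -> M) (G : nat -> M -> R) : R :=
  fine (lim ((fun eps : R => limn_esup (fun n =>
              (n%:R^-1 * ln (inf (cover_sums phi G n eps)))%:E)) @ 0^'+)).

Definition msupport (P : set (BorelType M) -> \bar R) : set M :=
  [set x | forall U : set M, open U -> U x -> (0 < P U)%E].

Definition weak_gibbs (phi : M -> M) (G : nat -> M -> R)
    (P : set (BorelType M) -> \bar R) : Prop :=
  exists K : nat -> R -> R,
    (forall n eps, (1 <= n)%N -> 0 < eps -> 1 <= K n eps) /\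
    (forall n eps x, (1 <= n)%N -> 0 < eps ->
       (((K n eps)^-1 * expR (G n x - n%:R * pressure phi G))%:E <=
          P (bowen_ball phi n x eps))%E /\
       (P (bowen_ball phi n x eps) <=
        (K n eps * expR (G n x - n%:R * pressure phi G))%:E)%E) /\
    (fun eps : R => limn_esup (fun n => (n%:R^-1 * ln (K n eps))%:E)) @ 0^'+ --> 0%E.

End Defs.

From HB Require Import structures.
From mathcomp Require Import all_boot all_order all_algebra.
From mathcomp Require Import all_classical all_reals all_analysis.
From mathcomp Require Import lra.
Import Order.TTheory GRing.Theory Num.Theory.
Import numFieldNormedType.Exports.
Local Open Scope classical_set_scope.
Local Open Scope ring_scope.

(* The almost-everywhere bounds propagate to every point because P has full
   support: for any x, n and eps some y in B_n(x, eps/2) satisfies them at the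
   scales eps/2 and 2 eps, and B_n(y, eps/2) ⊆ B_n(x, eps) ⊆ B_n(y, 2 eps).
   Replacing G_n(y) by G_n(x) costs the oscillation D_n(eps) of G_n on Bowen
   balls, so K'_n(eps) = max(K_n(eps/2), K_n(2 eps)) e^(D_n(eps)) works.  It is
   still subexponential since D_n(eps) <= 2 |G_n - S_n G^(k)| + n w_k(eps),
   with w_k the modulus of uniform continuity of G^(k) on the compact M. *)

Section ereal_near.
Context {R : realType}.
Implicit Types (u : (\bar R)^nat) (l : \bar R).
Local Open Scope ereal_scope.

Lemma limn_esup_le_near u l : (\forall n \near \oo, u n <= l) -> limn_esup u <= l.
Proof.
move=> ul; apply: le_trans (ereal_inf_lbound _) _; first by exists [set n | u n <= l].
by apply: ge_ereal_sup => _ [n un <-].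
Qed.

Lemma limn_esup_ge_near u l : (\forall n \near \oo, l <= u n) -> l <= limn_esup u.
Proof.
move=> lu; rewrite limn_esup_lim; apply: lime_ge; first exact: is_cvg_esups.
apply: filterS lu => n /le_trans; apply.
by apply: ereal_sup_ubound; exists n => /=.
Qed.

Lemma limn_esup_lt_near u l : limn_esup u < l -> \forall n \near \oo, u n < l.
Proof.
rewrite /limn_esup /limf_esup => /ereal_inf_lt [_ [A FA <-]] Al.
apply: filterS FA => n An; apply: le_lt_trans Al.
by apply: ereal_sup_ubound; exists n.
Qed.

Lemma cvge0_lt_near {T} {F : set_system T} (f : T -> \bar R) (eta : R) :
  f @ F --> 0 -> (0 < eta)%R -> \forall t \near F, f t < eta%:E.
Proof. by move=> f0 eta0; apply: (f0 [set y | y < eta%:E]); apply: open_ereal_lt'. Qed.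

Lemma cvge0_squeeze {T} {F : set_system T} {FF : Filter F} (f : T -> \bar R) :
  (forall eta : R, (0 < eta)%R -> \forall t \near F, 0 <= f t <= eta%:E) ->
  f @ F --> 0.
Proof.
move=> f_small; apply/fine_cvgP; split.
  apply: filterS (f_small _ ltr01) => t /andP[f0 f1].
  by rewrite ge0_fin_numE // (le_lt_trans f1) // ltry.
apply/cvgrPdist_le => eta eta0; apply: filterS (f_small _ eta0) => t /=.
case: (f t) => [r| |] /=; rewrite ?leye_eq ?leeNy_eq ?andbF //.
by rewrite !lee_fin sub0r normrN => /andP[r0 r_eta]; rewrite ger0_norm.
Qed.

End ereal_near.

Arguments limn_esup_lt_near {R u l}.
Arguments cvge0_lt_near {R T F f eta}.

Lemma near0r_half_double {R : realType} {Q : R -> Prop} :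
  (\forall e \near 0^'+, Q e) -> \forall e \near 0^'+, Q (e / 2) /\ Q (e * 2).
Proof.
case=> d d0 Qd; exists (d / 2) => [|e]; first by rewrite /= divr_gt0.
rewrite /= sub0r normrN => ed e0; have e_lt_d2 : e < d / 2 by rewrite -[e]gtr0_norm.
split; apply: Qd; rewrite /= ?sub0r ?normrN ?gtr0_norm ?divr_gt0 ?mulr_gt0 //; lra.
Qed.

Section compact_metric.
Context {R : realType} {M : metricType R}.
Hypothesis compactM : compact [set: M].

Lemma compact_continuous_bounded (g : M -> R) :
  continuous g -> exists c, forall x, `|g x| <= c.
Proof.
move=> cg; have := continuous_compact (continuous_subspaceT cg) compactM.
case/compact_bounded => c [_ gc]; exists (c + 1) => x.
by apply: (gc (c + 1)); [rewrite ltrDl | exists x].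
Qed.

Lemma compact_continuous_unif_near (g : M -> R) (eta : R) :
  continuous g -> 0 < eta ->
  \forall d \near 0^'+, forall x y, mdist x y < d -> `|g x - g y| < eta.
Proof.
move=> cg eta0; have eta20 : 0 < eta / 2 by rewrite divr_gt0.
(* Heine-Cantor: the bound is local in (x, d), and compactness makes it uniform. *)
pose close d x := forall y, mdist x y < d -> `|g x - g y| < eta.
suff : \forall d \near 0^'+, [set: M] `<=` close d.
  by apply: filterS => d closeM x; apply: closeM.
apply: ((compact_near_coveringP [set: M]).1 compactM R (0^'+) close) => x _.
have /nbhs_ballP[r /= r0 gr] : \forall z \near x, `|g x - g z| < eta / 2.
  exact: cvgr_dist_lt (cg x) _ eta20.
have r20 : 0 < r / 2 by rewrite divr_gt0.
exists (ball x (r / 2), [set d | 0 < d < r / 2]); first split.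
- exact: nbhsx_ballx.
- apply: filterS (filterI (nbhs_right_lt r20) (nbhs_right_gt 0)) => d [dr d0].
  by rewrite /= dr d0.
move=> [x' d] [/= + /andP[d0 dr]] y x'y; rewrite ballEmdist /= => xx'.
have xx'r : ball x r x' by rewrite ballEmdist /=; lra.
have xyr : ball x r y.
  by rewrite ballEmdist /=; have := metric_triangle x x' y; lra.
have := gr _ xx'r; have := gr _ xyr; rewrite /= => gxy gxx'.
by apply: le_lt_trans (ler_distD (g x) _ _) _; rewrite [eta]splitr distrC ltrD.
Qed.

End compact_metric.

Arguments compact_continuous_bounded {R M} compactM {g}.
Arguments compact_continuous_unif_near {R M} compactM {g eta}.

Lemma continuous_iter {T : topologicalType} (f : T -> T) (k : nat) :
  continuous f -> continuous (iter k f).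
Proof.
move=> cf; elim: k => [|k IH] x /=; first exact: cvg_id.
exact: continuous_comp (IH x) (cf _).
Qed.

Lemma open_mdist_lt {R : realType} {M : metricType R} (c : M) (e : R) :
  open [set z | mdist z c < e].
Proof.
rewrite openE => y /= yc; have r0 : 0 < e - mdist y c by rewrite subr_gt0.
apply: filterS (nbhsx_ballx y _ r0) => z; rewrite ballEmdist /= => yz.
by have := metric_triangle z y c; rewrite (metric_sym z y); lra.
Qed.

Section bowen_ball.
Context {R : realType} {M : pointedMetricType R} (phi : M -> M).
Implicit Types (n : nat) (x y : M) (e : R).

Lemma bowen_ball_center n x e : 0 < e -> bowen_ball phi n x e x.
Proof. by move=> e0 k _; rewrite mdistxx. Qed.

Lemma bowen_ball_sym n x y e : bowen_ball phi n x e y -> bowen_ball phi n y e x.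
Proof. by move=> Bxy k kn; rewrite metric_sym; apply: Bxy. Qed.

Lemma bowen_ball_trans n x y e1 e2 e3 : bowen_ball phi n x e1 y -> e1 + e2 <= e3 ->
  bowen_ball phi n y e2 `<=` bowen_ball phi n x e3.
Proof.
move=> Bxy e123 z Byz k kn; have := Bxy k kn; have := Byz k kn.
by have := metric_triangle (iter k phi z) (iter k phi y) (iter k phi x); lra.
Qed.

Lemma bowen_ballS n x e : bowen_ball phi n.+1 x e =
  bowen_ball phi n x e `&` iter n phi @^-1` [set z | mdist z (iter n phi x) < e].
Proof.
apply/seteqP; split => y.
  by move=> Bxy; split => [k kn|]; apply: Bxy; rewrite ?ltnS ?(ltnW kn).
by move=> [Bxy Bn] k; rewrite ltnS leq_eqVlt => /predU1P[->|]; [exact: Bn | exact: Bxy].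
Qed.

Lemma open_bowen_ball n x e : continuous phi -> open (bowen_ball phi n x e).
Proof.
move=> cphi; elim: n => [|n IH].
  suff -> : bowen_ball phi 0 x e = setT by exact: openT.
  by rewrite predeqE => y; split => // _ [].
rewrite bowen_ballS; apply: openI => //.
by apply: open_comp; [move=> y _; exact: continuous_iter | exact: open_mdist_lt].
Qed.

Lemma measurable_bowen_ball n x e : continuous phi ->
  measurable (bowen_ball phi n x e : set (BorelType M)).
Proof. by move=> cphi; apply: sub_sigma_algebra; exact: open_bowen_ball. Qed.

End bowen_ball.

Arguments bowen_ball_sym {R M phi n x y e}.
Arguments bowen_ball_trans {R M phi n x y e1 e2 e3}.

Section gibbs_bound.
Context {R : realType} {M : pointedMetricType R} (phi : M -> M).
Variables (P : {measure set (BorelType M) -> \bar R}) (G : nat -> M -> R) (p : R).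

Definition bowen_gibbs_bound (C : R) (n : nat) (e : R) (x : M) : Prop :=
  ((C^-1 * expR (G n x - n%:R * p))%:E <= P (bowen_ball phi n x e))%E /\
  (P (bowen_ball phi n x e) <= (C * expR (G n x - n%:R * p))%:E)%E.

Lemma msupport_ae_meets (Q : M -> Prop) (U : set M) (x : M) :
  msupport P = [set: M] -> {ae P, forall y : BorelType M, Q y} ->
  open U -> U x -> exists2 y, U y & Q y.
Proof.
move=> suppP [N [mN PN0 notQN]] oU Ux; apply: contrapT => noQU.
have : msupport P x by rewrite suppP.
move=> /(_ U oU Ux); apply/negP; rewrite -leNgt -PN0.
apply: le_measure; rewrite ?inE //; first exact: sub_sigma_algebra.
by move=> z Uz; apply: notQN => Qz; apply: noQU; exists z.
Qed.

Lemma bowen_gibbs_bound_transfer (Ka Kb D : R) n e x y :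
  continuous phi -> 0 < e -> 0 < Ka -> 0 < Kb ->
  bowen_ball phi n x (e / 2) y -> `|G n x - G n y| <= D ->
  bowen_gibbs_bound Ka n (e / 2) y -> bowen_gibbs_bound Kb n (e * 2) y ->
  bowen_gibbs_bound (Num.max Ka Kb * expR D) n e x.
Proof.
move=> cphi e0 Ka0 Kb0 Bxy GxyD [lowy _] [_ upy].
have small_in : bowen_ball phi n y (e / 2) `<=` bowen_ball phi n x e.
  by apply: bowen_ball_trans Bxy _; lra.
have big_out : bowen_ball phi n x e `<=` bowen_ball phi n y (e * 2).
  by apply: bowen_ball_trans (bowen_ball_sym Bxy) _; lra.
have [GxyD1 GxyD2] : G n x - D <= G n y /\ G n y <= G n x + D.
  by move: GxyD; rewrite ler_norml; lra.
have Km0 : 0 < Num.max Ka Kb by rewrite lt_max Ka0.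
have mB z r : (bowen_ball phi n z r : set (BorelType M)) \in measurable.
  by rewrite inE; exact: measurable_bowen_ball.
split.
- have PyPx : (P (bowen_ball phi n y (e / 2)) <= P (bowen_ball phi n x e))%E.
    exact: le_measure (mB _ _) (mB _ _) small_in.
  apply: le_trans _ (le_trans lowy PyPx).
  rewrite lee_fin invfM -mulrA -expRN -expRD; apply: ler_pM.
  + by rewrite invr_ge0 ltW.
  + exact: expR_ge0.
  + by rewrite lef_pV2 ?posrE // le_max lexx.
  + by rewrite ler_expR; lra.
- have PxPy : (P (bowen_ball phi n x e) <= P (bowen_ball phi n y (e * 2)))%E.
    exact: le_measure (mB _ _) (mB _ _) big_out.
  apply: le_trans (le_trans PxPy upy) _.
  rewrite lee_fin -mulrA -expRD; apply: ler_pM.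
  + exact: ltW.
  + exact: expR_ge0.
  + by rewrite le_max lexx orbT.
  + by rewrite ler_expR; lra.
Qed.

End gibbs_bound.

Arguments msupport_ae_meets {R M P Q U x}.
Arguments bowen_gibbs_bound_transfer {R M phi P G p Ka Kb D n e x y}.

Lemma supnorm_ub {R : realType} {M : pointedMetricType R} (f : M -> R) (x : M) :
  (exists c, forall y, `|f y| <= c) -> `|f x| <= supnorm f.
Proof. by move=> [c fc]; apply: ub_le_sup; [exists c => _ [y _ <-] | exists x]. Qed.

Section bowen_oscillation.
Context {R : realType} {M : pointedMetricType R} (phi : M -> M) (G : nat -> M -> R).
Implicit Types (n : nat) (e eta : R).

Definition bowen_oscillation n e : R :=
  sup [set r | exists a b, bowen_ball phi n a e b /\ r = `|G n a - G n b|].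

Lemma bowen_oscillation_ub n e a b : (exists c, forall x, `|G n x| <= c) ->
  bowen_ball phi n a e b -> `|G n a - G n b| <= bowen_oscillation n e.
Proof.
move=> [c Gc] Bab; apply: ub_le_sup; last by exists a, b.
exists (c + c) => _ [a' [b' [_ ->]]].
by apply: le_trans (ler_normB _ _) _; rewrite lerD.
Qed.

Lemma bowen_oscillation_ge0 n e : (exists c, forall x, `|G n x| <= c) -> 0 < e ->
  0 <= bowen_oscillation n e.
Proof.
move=> Gb e0.
have := bowen_oscillation_ub _ _ _ _ Gb (bowen_ball_center phi n point e e0).
exact: le_trans (normr_ge0 _).
Qed.

Lemma birkhoff_bowen_ball_dist n e eta (g : M -> R) a b :
  (forall x y, mdist x y < e -> `|g x - g y| < eta) -> bowen_ball phi n a e b ->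
  `|birkhoff phi n g a - birkhoff phi n g b| <= n%:R * eta.
Proof.
move=> gU Bab; rewrite /birkhoff -sumrB.
apply: le_trans (ler_norm_sum _ _ _) _.
rewrite mulr_natl -[X in eta *+ X]card_ord -sumr_const.
by apply: ler_sum => k _; rewrite distrC ltW // gU // Bab.
Qed.

Lemma bowen_oscillation_le_supnorm n e eta (g : M -> R) :
  (exists c, forall x, `|G n x| <= c) -> (exists c, forall x, `|g x| <= c) ->
  0 < e -> (forall x y, mdist x y < e -> `|g x - g y| < eta) ->
  bowen_oscillation n e <=
    2 * supnorm (fun x => G n x - birkhoff phi n g x) + n%:R * eta.
Proof.
move=> [c Gc] [cg gc] e0 gU.
set s := supnorm _.
have Gg_s x : `|G n x - birkhoff phi n g x| <= s.
  apply: supnorm_ub; exists (c + \sum_(k < n) cg) => y.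
  apply: le_trans (ler_normB _ _) _; apply: lerD => //.
  by apply: le_trans (ler_norm_sum _ _ _) _; apply: ler_sum.
apply: ge_sup => [|_ [a [b [Bab ->]]]].
  by exists 0, point, point; split; [exact: bowen_ball_center | rewrite subrr normr0].
have := Gg_s a; have := Gg_s b; have := birkhoff_bowen_ball_dist n e eta g a b gU Bab.
set Sa := birkhoff _ _ _ a; set Sb := birkhoff _ _ _ b.
have : `|G n a - G n b| <= `|G n a - Sa| + `|Sa - G n b| := ler_distD _ _ _.
have : `|Sa - G n b| <= `|Sa - Sb| + `|G n b - Sb|.
  by rewrite (distrC (G n b)); exact: ler_distD.
lra.
Qed.

End bowen_oscillation.

Arguments bowen_oscillation_ub {R M phi G n e a b}.

Section weak_gibbs_constant.
Context {R : realType} {M : pointedMetricType R} (phi : M -> M) (G : nat -> M -> R).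
Variable K : nat -> R -> R.
Hypothesis K_ge1 : forall n e, (1 <= n)%N -> 0 < e -> 1 <= K n e.
Hypothesis G_bounded : forall n, exists c, forall x, `|G n x| <= c.

Definition weak_gibbs_constant (n : nat) (e : R) : R :=
  Num.max (K n (e / 2)) (K n (e * 2)) * expR (bowen_oscillation phi G n e).

Lemma weak_gibbs_constant_ge1 n e : (1 <= n)%N -> 0 < e -> 1 <= weak_gibbs_constant n e.
Proof.
move=> n1 e0; apply: mulr_ege1; first by rewrite le_max K_ge1 ?divr_gt0.
by rewrite -expR0 ler_expR bowen_oscillation_ge0.
Qed.

Lemma weak_gibbs_constant_rate_lt n e eta (g : M -> R) :
  (1 <= n)%N -> 0 < e -> (exists c, forall x, `|g x| <= c) ->
  (forall x y, mdist x y < e -> `|g x - g y| < eta) ->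
  n%:R^-1 * ln (K n (e / 2)) < eta -> n%:R^-1 * ln (K n (e * 2)) < eta ->
  n%:R^-1 * supnorm (fun x => G n x - birkhoff phi n g x) < eta ->
  n%:R^-1 * ln (weak_gibbs_constant n e) < 4 * eta.
Proof.
move=> n1 e0 gb gU Ka Kb Gg.
have Kmax0 : 0 < Num.max (K n (e / 2)) (K n (e * 2)).
  by rewrite (lt_le_trans ltr01) // le_max K_ge1 ?divr_gt0.
rewrite /weak_gibbs_constant lnM ?posrE ?expR_gt0 // expRK mulrDr.
have Kmax : n%:R^-1 * ln (Num.max (K n (e / 2)) (K n (e * 2))) < eta.
  by have [] := leP (K n (e / 2)) (K n (e * 2)).
have osc := bowen_oscillation_le_supnorm phi G n e eta g (G_bounded n) gb e0 gU.
have n0 : n%:R != 0 :> R by rewrite pnatr_eq0 -lt0n.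
have : n%:R^-1 * bowen_oscillation phi G n e <=
    2 * (n%:R^-1 * supnorm (fun x => G n x - birkhoff phi n g x)) + eta.
  apply: le_trans (ler_wpM2l _ osc) _; first by rewrite invr_ge0.
  by rewrite mulrDr mulrCA (mulrA _ n%:R) mulVf // mul1r.
lra.
Qed.

Lemma weak_gibbs_constant_subexp (Gk : nat -> M -> R) :
  compact [set: M] -> (forall k, continuous (Gk k)) ->
  (fun e => limn_esup (fun n => (n%:R^-1 * ln (K n e))%:E)) @ 0^'+ --> 0%E ->
  (fun k => limn_esup (fun n =>
     (n%:R^-1 * supnorm (fun x => G n x - birkhoff phi n (Gk k) x))%:E)) @ \oo --> 0%E ->
  (fun e => limn_esup (fun n => (n%:R^-1 * ln (weak_gibbs_constant n e))%:E))
    @ 0^'+ --> 0%E.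
Proof.
move=> compactM Gk_cont K_subexp Gk_approx; apply: cvge0_squeeze => eta eta0.
have eta40 : 0 < eta / 4 by rewrite divr_gt0.
have [k0 _ /(_ k0 (leqnn k0)) Gk0] := cvge0_lt_near Gk_approx eta40.
have [ck Gk0_bounded] := compact_continuous_bounded compactM (Gk_cont k0).
have K_small := near0r_half_double (cvge0_lt_near K_subexp eta40).
have Gk0_unif := compact_continuous_unif_near compactM (Gk_cont k0) eta40.
apply: filterS (filterI (nbhs_right_gt 0) (filterI K_small Gk0_unif)).
move=> e [/= e0 [[Ka Kb] Gk0_e]]; apply/andP; split.
  apply: limn_esup_ge_near; exists 1%N => // n /= n1.
  by rewrite lee_fin mulr_ge0 ?invr_ge0 // ln_ge0 // weak_gibbs_constant_ge1.
apply: limn_esup_le_near; have n_ge1 : \forall n \near \oo, (1 <= n)%N by exists 1%N.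
apply: filterS (filterI n_ge1 (filterI (limn_esup_lt_near Ka)
  (filterI (limn_esup_lt_near Kb) (limn_esup_lt_near Gk0)))).
move=> n [n1 [Kan [Kbn Gk0n]]]; rewrite !lte_fin in Kan Kbn Gk0n.
have := weak_gibbs_constant_rate_lt n e (eta / 4) (Gk k0) n1 e0
  (ex_intro _ ck Gk0_bounded) Gk0_e Kan Kbn Gk0n.
by rewrite lee_fin; lra.
Qed.

End weak_gibbs_constant.

Theorem lemma4p3 (R : realType) (M : pointedMetricType R)
  (phi : M -> M) (G : nat -> M -> R) (P : probability (BorelType M) R)
  (K : nat -> R -> R) :
  compact [set: M] ->
  continuous phi ->
  asymp_additive phi G ->
  msupport P = [set: M] ->
  (forall n eps, (1 <= n)%N -> 0 < eps -> 1 <= K n eps) ->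
  (fun eps : R => limn_esup (fun n => (n%:R^-1 * ln (K n eps))%:E)) @ 0^'+ --> 0%E ->
  (forall n eps, (1 <= n)%N -> 0 < eps ->
     {ae P, forall x : BorelType M,
       (((K n eps)^-1 * expR (G n x - n%:R * pressure phi G))%:E <=
          P (bowen_ball phi n x eps))%E /\
       (P (bowen_ball phi n x eps) <=
        (K n eps * expR (G n x - n%:R * pressure phi G))%:E)%E}) ->
  weak_gibbs phi G P.
Proof.
move=> compactM cphi [G_borel [Gk [Gk_cont Gk_approx]]] suppP K_ge1 K_subexp gibbs_ae.
have G_bounded n : exists c, forall x, `|G n x| <= c by case: (G_borel n).
exists (weak_gibbs_constant phi G K); split; [|split].
- exact: weak_gibbs_constant_ge1.
- move=> n e x n1 e0; have e20 : 0 < e / 2 by rewrite divr_gt0.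
  have e2_0 : 0 < e * 2 by rewrite mulr_gt0.
  have [y Bxy [gibbs_y gibbs_y']] := msupport_ae_meets suppP
    (filterI (gibbs_ae n _ n1 e20) (gibbs_ae n _ n1 e2_0))
    (open_bowen_ball _ _ _ _ cphi) (bowen_ball_center phi n x _ e20).
  apply: bowen_gibbs_bound_transfer gibbs_y gibbs_y' => //.
  + exact: lt_le_trans ltr01 (K_ge1 n _ n1 e20).
  + exact: lt_le_trans ltr01 (K_ge1 n _ n1 e2_0).
  + apply: bowen_oscillation_ub => //.
    by apply: bowen_ball_trans Bxy _ y (bowen_ball_center phi n y _ e20); lra.
- exact: weak_gibbs_constant_subexp K_ge1 G_bounded Gk compactM Gk_cont
    K_subexp Gk_approx.
Qed.
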